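(* Let $C'$, $S$, $\widehat C$ be as in the context, and let $C'T'$ be a filling (with positive integer entries) of a Young diagram whose first column is $C'$. Let $\widehat C C'T'$ be the filling obtained by adjoining $\widehat C$ as a new first column on the left. If $(\widehat C,C')$ satisfies the Non-overlapping Condition, then \[ \mathrm{inv}(\widehat C C'T')=\mathrm{inv}(C'T')+\hat N . \]
   Context: A column is a finite sequence of entries listed top to bottom. $C'=(C'(1),\ldots,C'(c'))$ is a sequence of distinct positive integers and $S$ is a set of $c$ positive integers, $c\in\{c',c'+1\}$, such that with $s_1<\cdots<s_c$ the elements of $S$ and $t_1<\cdots<t_{c'}$ the entries of $C'$ sorted, $s_r\le t_r$ for $r\le c'$. The column $\widehat C$ of length $c$ is built as follows: every $x\in S\cap C'$ is placed in the row where $x$ occurs in $C'$; if $c=c'+1$, the largest element of $S\setminus C'$ is placed in row $c$; the remaining elements of $S\setminus C'$, in decreasing order, are placed in the rows occupied in $C'$ by the elements of $C'\setminus S$, in decreasing order (the $k$-th largest next to the $k$-th largest). (Since $c\ge c'$, $\widehat CC'T'$ is a filling of a Young diagram.) Pivots: row $r$ is a pivot row if either $r\le c'$ and $\widehat C(r)<C'(r)$, or $r=c'+1\le c$. With pivot rows $q_1,\ldots,q_p$, put $b_j=\widehat C(q_j)$, $d_j=C'(q_j)$ if $q_j\le c'$ and $d_j=\infty$ otherwise. Non-overlapping Condition: $p\le1$, or the intervals $[b_j,d_j]$ ($[b_j,\infty)$ if $d_j=\infty$) are pairwise disjoint. Define $\hat N=\sum_{j=1}^p\#\{r<q_j:\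 C'(r)\in S,\ b_j<C'(r)<d_j\}$. Inversion statistic of a filling $\sigma$ of a Young diagram (cells $(i,j)$, row $i$, column $j$, English convention): $\mathrm{inv}(\sigma)$ is the number of pairs of cells $(u,v)$ with $u=(j,k)$, $v=(i,k+1)$, $i<j$, such that $\sigma(u)<\sigma(v)<\sigma(w)$ where $w=(j,k+1)$ if this cell exists, and such that $\sigma(u)<\sigma(v)$ otherwise. *)

From mathcomp Require Import all_boot.
Set Implicit Arguments. Unset Strict Implicit. Unset Printing Implicit Defensive.

(* Conventions: a column is a [seq nat], listed top to bottom; rows are
   0-indexed (row r here = row r+1 in the paper).  A filling of a Young
   diagram is a [seq (seq nat)] listing its columns left to right. *)

Definition entry (F : seq (seq nat)) (k r : nat) : nat := nth 0 (nth [::] F k) r.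
Definition colsz (F : seq (seq nat)) (k : nat) : nat := size (nth [::] F k).

Definition is_filling (F : seq (seq nat)) : Prop :=
  sorted geq (map size F) /\ all (all (fun x => 0 < x)) F.

(* u = (row j, column k), v = (row i, column k+1), i < j,
   w = (row j, column k+1) if that cell exists. *)
Definition inv_pair (F : seq (seq nat)) (k j i : nat) : bool :=
  let a := entry F k j in
  let b := entry F k.+1 i in
  if j < colsz F k.+1 then (a < b) && (b < entry F k.+1 j) else a < b.

Definition inv_stat (F : seq (seq nat)) : nat :=
  \sum_(k < (size F).-1) \sum_(j < colsz F k)
     \sum_(i < j | i < colsz F k.+1) inv_pair F k j i.

Definition SmC (S C' : seq nat) : seq nat := sort geq [seq x <- S | x \notin C'].
Definition CmS (S C' : seq nat) : seq nat := sort geq [seq x <- C' | x \notin S].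
Definition SmC_rest (S C' : seq nat) : seq nat :=
  if size S == (size C').+1 then behead (SmC S C') else SmC S C'.

Definition Chat_entry (S C' : seq nat) (r : nat) : nat :=
  if r < size C' then
    let x := nth 0 C' r in
    if x \in S then x else nth 0 (SmC_rest S C') (index x (CmS S C'))
  else head 0 (SmC S C').

Definition Chat (S C' : seq nat) : seq nat := mkseq (Chat_entry S C') (size S).

(* hypotheses on (C', S) from the context *)
Definition admissible (C' S : seq nat) : Prop :=
  [/\ uniq C' && all (fun x => 0 < x) C', uniq S && all (fun x => 0 < x) S,
      (size S == size C') || (size S == (size C').+1)
    & forall r, r < size C' -> nth 0 (sort leq S) r <= nth 0 (sort leq C') r].

Definition is_pivot (S C' : seq nat) (r : nat) : bool :=
  ((r < size C') && (nth 0 (Chat S C') r < nth 0 C' r))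
  || ((r == size C') && (size C' < size S)).

Definition piv_b (S C' : seq nat) (q : nat) : nat := nth 0 (Chat S C') q.
(* upper endpoint d_j; None stands for infinity *)
Definition piv_d (C' : seq nat) (q : nat) : option nat :=
  if q < size C' then Some (nth 0 C' q) else None.

Definition lt_opt (d : option nat) (y : nat) : bool :=
  if d is Some x then x < y else false.
Definition below_opt (y : nat) (d : option nat) : bool :=
  if d is Some x then y < x else true.

Definition piv_disjoint (S C' : seq nat) (p q : nat) : bool :=
  lt_opt (piv_d C' p) (piv_b S C' q) || lt_opt (piv_d C' q) (piv_b S C' p).

Definition non_overlapping (S C' : seq nat) : Prop :=
  forall p q, p < size S -> q < size S -> p != q ->
    is_pivot S C' p -> is_pivot S C' q -> piv_disjoint S C' p q.

Definition Nhat (S C' : seq nat) : nat :=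
  \sum_(q < size S | is_pivot S C' q)
    #|[set r : 'I_q | (r < size C') && (nth 0 C' r \in S)
         && (piv_b S C' q < nth 0 C' r) && below_opt (nth 0 C' r) (piv_d C' q)]|.

From Pilot Require Import Defs.
From mathcomp Require Import all_boot zify.

(* Adjoining the column Chat only creates the pairs (u, v) with u in row j of
   Chat and v in row i < j of C'; such a pair is an inversion iff
   b_j < C'(i) < d_j.  If C'(i) is in S this says exactly that row j is a
   pivot and that row i is counted in Nhat.  If C'(i) is not in S, the
   dominance of S over C' forces Chat(i) < C'(i), so row i is a pivot as well
   and the intervals [b_i, d_i] and [b_j, d_j] would both contain C'(i),
   contradicting the Non-overlapping Condition. *)

Lemma sorted_count_nth (T : Type) (x0 : T) (r : rel T) (a : pred T) s i :
  transitive r -> (forall x y, r x y -> a y -> a x) -> sorted r s -> i < size s ->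
  (i < count a s) = a (nth x0 s i).
Proof.
move=> r_trans a_closed; elim: s i => [//|x s IHs] i /= r_xs.
case ax: (a x) => /=.
  by case: i => [|i] //= lti; rewrite ltnS IHs // (path_sorted r_xs).
have notin_a : all (predC a) s.
  apply: sub_all (order_path_min r_trans r_xs) => y /= rxy.
  by apply/negP => /(a_closed _ _ rxy); rewrite ax.
have -> : count a s = 0 by apply/eqP; rewrite -leqn0 leqNgt -has_count -all_predC.
by case: i => [|i] //= lti; move/(all_nthP x0): notin_a => /(_ i lti) /negbTE.
Qed.

Lemma count_leq_sort_dominated (s1 s2 : seq nat) t :
  size s1 <= size s2 ->
  (forall r, r < size s1 -> nth 0 (sort leq s2) r <= nth 0 (sort leq s1) r) ->
  count (leq^~ t) s1 <= count (leq^~ t) s2.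
Proof.
move=> le_size dominated.
rewrite -(permP (permEl (perm_sort leq s1))) -(permP (permEl (perm_sort leq s2))).
have count_nth s i : i < size s ->
    (i < count (leq^~ t) (sort leq s)) = (nth 0 (sort leq s) i <= t).
  move=> lti; apply: (@sorted_count_nth _ 0 leq); rewrite ?size_sort //.
  - exact: leq_trans.
  - by move=> x y /= le_xy le_yt; apply: leq_trans le_yt.
  - exact: sort_sorted leq_total s.
case Em: (count _ (sort leq s1)) => [//|m].
have lt_m1 : m < size s1.
  by rewrite -(size_sort leq) -ltnS -Em ltnS count_size.
have : m < count (leq^~ t) (sort leq s1) by rewrite Em.
rewrite !count_nth //; last exact: leq_trans le_size.
exact/leq_trans/dominated.
Qed.

Lemma count_filter_notin_balance (T : eqType) (a : pred T) (s1 s2 : seq T) :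
  uniq s1 -> uniq s2 ->
  count a [seq x <- s1 | x \notin s2] + count a s2
  = count a [seq x <- s2 | x \notin s1] + count a s1.
Proof.
move=> uniq1 uniq2.
have split_count (s s' : seq T) : count a s
    = count a [seq x <- s | x \in s'] + count a [seq x <- s | x \notin s'].
  by rewrite -count_cat (permP (permEl (perm_filterC (mem s') s))).
have common : perm_eq [seq x <- s1 | x \in s2] [seq x <- s2 | x \in s1].
  by apply: uniq_perm; rewrite ?filter_uniq // => x; rewrite !mem_filter andbC.
rewrite (split_count s1 s2) (split_count s2 s1) (permP common); lia.
Qed.

Section NewColumn.

Variables C' S : seq nat.
Hypothesis adm : admissible C' S.

Lemma size_S_bounds : size C' <= size S <= (size C').+1.
Proof. by case: adm => _ _ /orP[] /eqP ->; rewrite leqnSn ?leqnn. Qed.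

Lemma count_gt_SmC (x : nat) :
  count (fun y => x < y) (SmC S C')
  <= count (fun y => x < y) (CmS S C') + (size S - size C').
Proof.
case: adm => /andP[uniqC' _] /andP[uniqS _] _ dominated.
have /andP[leC'S _] := size_S_bounds.
have := count_leq_sort_dominated _ _ x leC'S dominated.
have := count_filter_notin_balance _ (fun y => x < y) _ _ uniqC' uniqS.
rewrite /SmC /CmS !(permP (permEl (perm_sort geq _))).
have split_size s : count (fun y => x < y) s + count (leq^~ x) s = size s.
  rewrite -(count_predC (fun y => x < y)); congr (_ + _).
  by apply: eq_count => y /=; rewrite leqNgt.
have := split_size C'; have := split_size S.
(* The [set]s identify the counts over [Equality.sort nat] coming from the
   generic balance lemma with those over [nat], which [lia] keeps apart. *)
set SmC_gt := count _ [seq y <- S | _]; set CmS_gt := count _ [seq y <- C' | _].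
set S_gt := count (fun y => x < y) S; set C'_gt := count (fun y => x < y) C'; lia.
Qed.

Lemma nth_Chat_notin r : r < size C' -> nth 0 C' r \notin S ->
  nth 0 (Chat S C') r
  = nth 0 (SmC S C') (index (nth 0 C' r) (CmS S C') + (size S - size C')).
Proof.
move=> ltr notinS; have /andP[leC'S leSC'1] := size_S_bounds.
rewrite nth_mkseq ?(leq_trans ltr) // /Chat_entry ltr (negbTE notinS) /SmC_rest.
case: eqP => [-> | neq]; first by rewrite subSnn addn1 nth_behead.
have -> : size S - size C' = 0 by lia.
by rewrite addn0.
Qed.

Lemma Chat_lt_notin r : r < size C' -> nth 0 C' r \notin S ->
  nth 0 (Chat S C') r < nth 0 C' r.
Proof.
(* Counting from 0, C'(r) is the k-th largest element of C' \ S and Chat(r)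
   the (k+e)-th largest of S \ C'; were it larger than C'(r), S \ C' would
   have k+e+1 elements above C'(r), while [count_gt_SmC] allows at most k+e. *)
move=> ltr notinS; rewrite nth_Chat_notin //.
set x := nth 0 C' r in notinS *; set k := index x _; set e := size S - size C'.
have count_gt_nth s i : sorted geq s -> i < size s ->
    (i < count (fun y => x < y) s) = (x < nth 0 s i).
  move=> sorted_s lti; apply: (@sorted_count_nth _ 0 geq) sorted_s lti.
  - by move=> y z w le_zy le_wz; exact: leq_trans le_wz le_zy.
  - by move=> y z /= le_zy /leq_trans->.
have geq_total : total geq by move=> y z; exact: leq_total.
case: (ltnP (k + e) (size (SmC S C'))) => [ltkD | /(nth_default 0) ->]; last first.
  by case: adm => /andP[_ /allP pos_C'] _ _ _; apply/pos_C'/mem_nth.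
have xA : x \in CmS S C' by rewrite mem_sort mem_filter notinS mem_nth.
have not_ltA : ~~ (k < count (fun y => x < y) (CmS S C')).
  by rewrite count_gt_nth ?(sort_sorted geq_total) ?index_mem // /k nth_index // ltnn.
rewrite ltn_neqAle; apply/andP; split.
  apply: contraNneq notinS => <-.
  by have := mem_nth 0 ltkD; rewrite mem_sort mem_filter => /andP[].
rewrite leqNgt -count_gt_nth ?(sort_sorted geq_total) //.
by apply: contra not_ltA => lt_kD; have := count_gt_SmC x; lia.
Qed.

Lemma inv_pair_Chat (T' : seq (seq nat)) j i :
  Defs.inv_pair (Chat S C' :: C' :: T') 0 j i
  = (piv_b S C' j < nth 0 C' i) && below_opt (nth 0 C' i) (piv_d C' j).
Proof.
by rewrite /Defs.inv_pair /entry /colsz /piv_b /piv_d /=; case: ifP; rewrite ?andbT.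
Qed.

Lemma is_pivot_between j y : j < size S ->
  piv_b S C' j < y -> below_opt y (piv_d C' j) -> is_pivot S C' j.
Proof.
move=> ltj; rewrite /is_pivot /piv_b /piv_d; have /andP[_ leSC'1] := size_S_bounds.
case: (ltnP j (size C')) => [_ /= lt_by /(ltn_trans lt_by) -> // | ge_j _ _ /=].
by apply/andP; split; lia.
Qed.

Hypothesis non_overlap : non_overlapping S C'.

Lemma between_pivot_mem i j : i < j -> j < size S -> i < size C' ->
  piv_b S C' j < nth 0 C' i -> below_opt (nth 0 C' i) (piv_d C' j) ->
  nth 0 C' i \in S.
Proof.
move=> ltij ltj lti lt_b below; apply: contraT => notinS.
have lt_bi := Chat_lt_notin _ lti notinS.
have piv_i : is_pivot S C' i by rewrite /is_pivot lti lt_bi.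
have := non_overlap _ _ (ltn_trans ltij ltj) ltj (negbT (ltn_eqF ltij)) piv_i.
move/(_ (is_pivot_between _ _ ltj lt_b below)).
rewrite /piv_disjoint {1}/piv_d lti /= ltnNge ltnW //=.
by case: (piv_d C' j) below => //= d lt_d; rewrite ltnNge ltnW // (ltn_trans lt_bi).
Qed.

Lemma inv_pair_Chat_pivot (T' : seq (seq nat)) j i : i < j < size S ->
  (i < size C') && Defs.inv_pair (Chat S C' :: C' :: T') 0 j i
  = is_pivot S C' j && ((i < size C') && (nth 0 C' i \in S)
      && (piv_b S C' j < nth 0 C' i) && below_opt (nth 0 C' i) (piv_d C' j)).
Proof.
move=> /andP[ltij ltj]; rewrite inv_pair_Chat.
case: (ltnP i (size C')) => lti /=; last by rewrite andbF.
have [lt_b|] := boolP (piv_b S C' j < nth 0 C' i); last by rewrite !andbF.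
have [below|] := boolP (below_opt (nth 0 C' i) (piv_d C' j)); last by rewrite !andbF.
rewrite (between_pivot_mem _ _ ltij ltj lti lt_b below).
by rewrite (is_pivot_between _ _ ltj lt_b below).
Qed.

Lemma inv_first_column (T' : seq (seq nat)) :
  let F := Chat S C' :: C' :: T' in
  \sum_(j < colsz F 0) \sum_(i < j | i < colsz F 1) Defs.inv_pair F 0 j i = Nhat S C'.
Proof.
move=> F; rewrite /colsz /= size_mkseq /Nhat [RHS]big_mkcond; apply: eq_bigr => j _.
rewrite big_mkcond /=.
under eq_bigr => i _.
  rewrite (_ : (if i < size C' then _ else _)
               = (i < size C') && Defs.inv_pair F 0 j i :> nat); last by case: ifP.
  rewrite inv_pair_Chat_pivot ?ltn_ord //.
  over.
case: (is_pivot S C' j); last exact: big1.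
rewrite cardsE -sum1_card [RHS]big_mkcond; apply: eq_bigr => i _.
by rewrite unfold_in /=; case: (_ && below_opt _ _).
Qed.

End NewColumn.

Theorem lemma4p6 (C' S : seq nat) (T' : seq (seq nat)) :
  admissible C' S ->
  is_filling (C' :: T') ->
  non_overlapping S C' ->
  inv_stat (Chat S C' :: C' :: T') = inv_stat (C' :: T') + Nhat S C'.
Proof.
move=> adm _ non_overlap.
by rewrite /inv_stat /= big_ord_recl (inv_first_column _ _ adm non_overlap) addnC.
Qed.
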